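(* Let $\mathcal{C}=(\mathcal{A},\mathcal{G})$, $\mathcal{C}_1=(\mathcal{A}_1,\mathcal{G}_1)$ and $\mathcal{C}_2=(\mathcal{A}_2,\mathcal{G}_2)$ be contracts (same input dimension $m$ and output dimension $p$). Then $\mathcal{C}$ refines both $\mathcal{C}_1$ and $\mathcal{C}_2$ if and only if $\mathfrak{B}_i(\mathcal{A}_1)+\mathfrak{B}_i(\mathcal{A}_2)\subset\mathfrak{B}_i(\mathcal{A})$ and $\mathfrak{B}_o(\mathcal{G})\subset\mathfrak{B}_o(\mathcal{G}_1)\cap\mathfrak{B}_o(\mathcal{G}_2)$.
   Context: $C^\infty(\mathbb{R},\mathbb{R}^n)$ is the space of smooth functions $\mathbb{R}\to\mathbb{R}^n$; for a real polynomial matrix $R(s)=\sum_i R_is^i$, $R(\tfrac{d}{dt})w=\sum_i R_i w^{(i)}$. A system $\Sigma: P(\tfrac{d}{dt})y=Q(\tfrac{d}{dt})u$ (real polynomial matrices $P,Q$, $u\in C^\infty(\mathbb{R},\mathbb{R}^m)$, $y\in C^\infty(\mathbb{R},\mathbb{R}^p)$) is in input-output form if $P(s)$ is square and invertible and $P(s)^{-1}Q(s)$ is a proper rational matrix; its external behaviour is $\mathfrak{B}(\Sigma)=\{(u,y): P(\tfrac{d}{dt})y=Q(\tfrac{d}{dt})u\}$. An environment is $\mathcal{E}: 0=E(\tfrac{d}{dt})u$ with input behaviour $\mathfrak{B}_i(\mathcal{E})=\{u: E(\tfrac{d}{dt})u=0\}$. Assumptions $\mathcal{A}: 0=A(\tfrac{d}{dt})u$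 have input behaviour $\mathfrak{B}_i(\mathcal{A})=\{u:A(\tfrac{d}{dt})u=0\}$; guarantees $\mathcal{G}: G(\tfrac{d}{dt})y=0$ have output behaviour $\mathfrak{B}_o(\mathcal{G})=\{y:G(\tfrac{d}{dt})y=0\}$ (all $A,E,G$ real polynomial matrices). The interconnection of an environment $\mathcal{E}$ with $\Sigma$ has output behaviour $\mathfrak{B}_o(\mathcal{E}\wedge\Sigma)=\{y:\exists u\in\mathfrak{B}_i(\mathcal{E}),\ (u,y)\in\mathfrak{B}(\Sigma)\}$. A contract is a pair $\mathcal{C}=(\mathcal{A},\mathcal{G})$. An environment $\mathcal{E}$ is compatible with $\mathcal{C}$ if $\mathfrak{B}_i(\mathcal{E})\subset\mathfrak{B}_i(\mathcal{A})$; a system $\Sigma$ in input-output form implements $\mathcal{C}$ if $\mathfrak{B}_o(\mathcal{E}\wedge\Sigma)\subset\mathfrak{B}_o(\mathcal{G})$ for every environment $\mathcal{E}$ compatible with $\mathcal{C}$. Contract $\mathcal{C}_1$ refines $\mathcal{C}_2$ if every environment compatible with $\mathcal{C}_2$ is compatible with $\mathcal{C}_1$ and every implementation of $\mathcal{C}_1$ is an implementation of $\mathcal{C}_2$. The sum of subspaces is $\mathfrak{B}+\mathfrak{B}'=\{a+b: a\in\mathfrak{B}, b\in\mathfrak{B}'\}$. *)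

From HB Require Import structures.
From mathcomp Require Import all_boot all_order all_algebra.
From mathcomp Require Import all_classical all_reals all_analysis.
From mathcomp Require Import Rstruct Rstruct_topology.
Set Implicit Arguments. Unset Strict Implicit. Unset Printing Implicit Defensive.
Import Order.TTheory GRing.Theory Num.Theory.
Local Open Scope ring_scope.

Notation RR := Rdefinitions.R.

Definition traj (n : nat) := RR -> 'cV[RR]_n.

Definition comp n (w : traj n) (j : 'I_n) : RR -> RR := fun t => w t j 0.

Definition smooth n (w : traj n) : Prop :=
  forall (j : 'I_n) (k : nat) (t : RR), derivable (@derive1n RR RR^o k (comp w j) : RR^o -> RR^o) (t : RR^o) 1.

(* R(d/dt) w = sum_i R_i w^(i), for a k x n polynomial matrix R *)
Definition polyop k n (Rm : 'M[{poly RR}]_(k, n)) (w : traj n) : traj k :=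
  fun t => \col_(i < k) \sum_(l < n)
     \sum_(d < size (Rm i l)) (Rm i l)`_d * @derive1n RR RR^o d (comp w l) t.

Definition kerB k n (Rm : 'M[{poly RR}]_(k, n)) : traj n -> Prop :=
  fun w => smooth w /\ forall t, polyop Rm w t = 0.

(* input-output form: P square and invertible (det P <> 0 in R(s)),
   and P^{-1} Q = adj(P) Q / det P proper, i.e. every entry
   ((adj P) Q)_{ij} / det P has numerator degree <= denominator degree. *)
Definition io_form p m (P : 'M[{poly RR}]_p) (Q : 'M[{poly RR}]_(p, m)) : Prop :=
  \det P != 0 /\ forall i j, (size ((\adj P *m Q) i j) <= size (\det P))%N.

Definition extB p m (P : 'M[{poly RR}]_p) (Q : 'M[{poly RR}]_(p, m))
  (u : traj m) (y : traj p) : Prop :=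
  smooth u /\ smooth y /\ forall t, polyop P y t = polyop Q u t.

Definition interB p m k (E : 'M[{poly RR}]_(k, m))
  (P : 'M[{poly RR}]_p) (Q : 'M[{poly RR}]_(p, m)) : traj p -> Prop :=
  fun y => exists u, kerB E u /\ extB P Q u y.

(* a contract: assumptions A(d/dt)u = 0 and guarantees G(d/dt)y = 0 *)
Record io_contract (m p : nat) := IOContract {
  nA : nat; Amat : 'M[{poly RR}]_(nA, m);
  nG : nat; Gmat : 'M[{poly RR}]_(nG, p) }.

Definition BiA m p (C : io_contract m p) : traj m -> Prop := kerB (Amat C).
Definition BoG m p (C : io_contract m p) : traj p -> Prop := kerB (Gmat C).

Definition compatible m p k (E : 'M[{poly RR}]_(k, m)) (C : io_contract m p) : Prop :=
  forall u, kerB E u -> BiA C u.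

Definition implements m p (P : 'M[{poly RR}]_p) (Q : 'M[{poly RR}]_(p, m))
  (C : io_contract m p) : Prop :=
  io_form P Q /\
  forall k (E : 'M[{poly RR}]_(k, m)), compatible E C ->
    forall y, interB E P Q y -> BoG C y.

Definition refines m p (C1 C2 : io_contract m p) : Prop :=
  (forall k (E : 'M[{poly RR}]_(k, m)), compatible E C2 -> compatible E C1) /\
  (forall (P : 'M[{poly RR}]_p) (Q : 'M[{poly RR}]_(p, m)),
      implements P Q C1 -> implements P Q C2).

Definition sumB n (B1 B2 : traj n -> Prop) : traj n -> Prop :=
  fun w => exists a b, B1 a /\ B2 b /\ w = a \+ b.

From Pilot Require Import Defs.
From HB Require Import structures.
From mathcomp Require Import all_boot all_order all_algebra.
From mathcomp Require Import all_classical all_reals all_analysis.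
From mathcomp Require Import Rstruct Rstruct_topology.
From mathcomp Require Import perm.
Set Implicit Arguments. Unset Strict Implicit. Unset Printing Implicit Defensive.
Import Order.TTheory GRing.Theory Num.Theory.
Local Open Scope ring_scope.

(* The easy half is order-theoretic: refinement C <= C' means exactly that the
   assumptions of C' are stronger and the guarantees of C are stronger
   (refinesP), and a kernel behaviour contains B1 + B2 iff it contains B1 and B2.

   The substance is the guarantee part of refinesP: if every implementation of C
   implements C', then ker G(d/dt) is contained in ker G'(d/dt).  Autonomous systems
   P(d/dt) y = 0 with det P <> 0 implement C as soon as ker P is in ker G, so it
   suffices to show that kernel inclusion is tested by nonsingular square
   operators (kerB_incl_test).  For that we bring G into the diagonal form
   G = L diag(d) R with L, R unimodular (poly_diagonalizable, proved by Euclidean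
   row and column reduction over {poly F}); in the coordinates x = R(d/dt) y the
   torsion coordinates of x satisfy d_j(d/dt) x_j = 0 and lie in the kernel of a
   nonsingular diagonal test operator, while probing the free coordinates with
   polynomial trajectories t^n shows that G'(d/dt) R^-1(d/dt) ignores them. *)

(* Every polynomial matrix is equivalent, by unimodular transformations, to a
   rectangular diagonal matrix (without the divisibility chain of the Smith form). *)
Section PolyDiagonalForm.
Variable F : fieldType.

Definition diag_rect m n (d : seq {poly F}) : 'M[{poly F}]_(m, n) :=
  \matrix_(i, j) (d`_i *+ (i == j :> nat)).
Arguments diag_rect {m n} d.

Definition diagonalizable m n (M : 'M[{poly F}]_(m, n)) : Prop :=
  exists (L : 'M[{poly F}]_m) (R : 'M[{poly F}]_n) (d : seq {poly F}),
    [/\ L \in unitmx, R \in unitmx & M = L *m diag_rect d *m R].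

Lemma diagonalizable_equiv m n (U : 'M[{poly F}]_m) (V : 'M[{poly F}]_n) M :
  U \in unitmx -> V \in unitmx -> diagonalizable (U *m M *m V) -> diagonalizable M.
Proof.
move=> uU uV [L [R [d [uL uR dM]]]].
exists (invmx U *m L), (R *m invmx V), d.
split; rewrite ?unitmx_mul ?unitmx_inv ?uU ?uV ?uL ?uR //.
have -> : M = invmx U *m (U *m M *m V) *m invmx V.
  by rewrite mulmxA mulmxK // mulmxA mulVmx // mul1mx.
by rewrite dM !mulmxA.
Qed.

Lemma diagonalizable0 m n : diagonalizable (0 : 'M[{poly F}]_(m, n)).
Proof.
exists 1%:M, 1%:M, [::]; rewrite mulmx1 mul1mx; split; rewrite ?unitmx1 //.
by apply/matrixP => i j; rewrite !mxE nth_nil mul0rn.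
Qed.

Lemma diagonalizable_block m n (a : {poly F}) (S : 'M[{poly F}]_(m, n)) :
  diagonalizable S -> diagonalizable (block_mx a%:M 0 0 S : 'M[{poly F}]_(1 + m, 1 + n)).
Proof.
move=> [L [R [d [uL uR ->]]]].
exists (block_mx 1%:M 0 0 L), (block_mx 1%:M 0 0 R), (a :: d).
split; rewrite ?unitmxE ?det_ublock ?det1 ?mul1r -?unitmxE //.
have -> : diag_rect (a :: d) = block_mx a%:M 0 0 (diag_rect d) :> 'M[{poly F}]_(1 + m, 1 + n).
  by apply/matrixP=> i j; do 3?[rewrite ?mxE ?ord1 //=; case: splitP => ? ->].
by rewrite !mulmx_block !(mul0mx, mulmx0, addr0, add0r, mulmx1, mul1mx).
Qed.

Lemma col_euclid_step m n (M : 'M[{poly F}]_(m, n)) i j0 j :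
  ~~ (M i j0 %| M i j) ->
  exists2 U, U \in unitmx & (M *m U) i j = M i j %% M i j0.
Proof.
move=> ndv; have jj0 : j != j0 by apply: contraNneq ndv => ->; rewrite dvdpp.
pose c := M i j %/ M i j0; pose U := 1%:M - c *: delta_mx j0 j.
exists U.
  have [] // := @mulmx1_unit _ _ U (1%:M + c *: delta_mx j0 j).
  rewrite /U mulmxBl !mulmxDr !mulmx1 !mul1mx -!scalemxAl -!scalemxAr.
  by rewrite mul_delta_mx_0 // !scaler0 addr0 addrK.
rewrite mulmxBr mulmx1 -scalemxAr !mxE (bigD1 j0) //= big1 => [|k /negPf nk].
  by rewrite !mxE !eqxx mulr1 addr0 {1}(divp_eq (M i j) (M i j0)) addrAC subrr add0r.
by rewrite !mxE nk mulr0.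
Qed.

Lemma row_euclid_step m n (M : 'M[{poly F}]_(m, n)) i0 i j :
  ~~ (M i0 j %| M i j) ->
  exists2 U, U \in unitmx & (U *m M) i j = M i j %% M i0 j.
Proof.
move=> ndv; have ndvT : ~~ (M^T j i0 %| M^T j i) by rewrite !mxE.
have [U uU eU] := col_euclid_step ndvT.
exists U^T; first by rewrite unitmx_tr.
by rewrite -[M in U^T *m M]trmxK -trmx_mul mxE eU !mxE.
Qed.

Lemma pivot_clear m n (M : 'M[{poly F}]_(1 + m, 1 + n)) :
  (forall j, M 0 0 %| M 0 j) -> (forall i, M 0 0 %| M i 0) ->
  exists (U : 'M[{poly F}]_(1 + m)) (V : 'M[{poly F}]_(1 + n)) (S : 'M[{poly F}]_(m, n)),
    [/\ U \in unitmx, V \in unitmx & U *m M *m V = block_mx (M 0 0)%:M 0 0 S].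
Proof.
move=> rowdv coldv; set a := M 0 0.
pose X := map_mx (fun x => x %/ a) (ursubmx M).
pose Y := map_mx (fun x => x %/ a) (dlsubmx M).
have eA : ulsubmx M = a%:M by rewrite [ulsubmx M]mx11_scalar !mxE !lshift0.
have eX : ursubmx M = a%:M *m X.
  by apply/matrixP => i j; rewrite mul_scalar_mx !mxE ord1 lshift0 divpKC ?rowdv.
have eY : dlsubmx M = Y *m a%:M.
  by apply/matrixP => i j; rewrite mul_mx_scalar !mxE ord1 lshift0 divpKC ?coldv.
exists (block_mx 1%:M 0 (- Y) 1%:M), (block_mx 1%:M (- X) 0 1%:M).
exists (drsubmx M - Y *m ursubmx M).
split; rewrite ?unitmxE ?det_ublock ?det_lblock ?det1 ?mul1r ?unitr1 //.
rewrite -{1}[M]submxK eA {1}eX eY !mulmx_block.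
rewrite !(mul0mx, mulmx0, addr0, add0r, mulmx1, mul1mx, mulNmx, mulmxN).
by rewrite !addNr mul0mx oppr0 add0r addrC eX.
Qed.

(* By induction on the dimensions and, inside, on the degree of a nonzero
   pivot: either a Euclidean step produces a nonzero entry of smaller degree,
   or the pivot divides its row and column and can be cleared. *)
Theorem poly_diagonalizable m n (M : 'M[{poly F}]_(m, n)) : diagonalizable M.
Proof.
have [N] := ubnP (m + n); elim: N m n M => // N IHN m n M lt_mn_N.
have [[i j] /= nzM | M0] := pickP (fun k : 'I_m * 'I_n => M k.1 k.2 != 0); last first.
  suff -> : M = 0 by exact: diagonalizable0.
  by apply/matrixP => i j; apply/eqP; rewrite mxE; exact: negbFE (M0 (i, j)).
case: m i => [[] //|m] i in M nzM lt_mn_N *.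
case: n j => [[] //|n] j in M nzM lt_mn_N *.
have [A ltA] := ubnP (size (M i j)).
elim: A => // A IHA in M i j nzM ltA *.
have smaller (r : {poly F}) : ~~ (M i j %| r) -> r %% M i j != 0 /\ (size (r %% M i j)%R < A)%N.
  move=> ndv; split; first by apply: contra ndv => /eqP/modp_eq0P.
  by apply: leq_trans (ltn_modpN0 _ nzM) _; rewrite -ltnS.
case: (pickP [pred l | ~~ (M i j %| M i l)]) => [l /= ndv | rowdv].
  have [V uV eV] := col_euclid_step ndv.
  apply: (diagonalizable_equiv (unitmx1 _ _) uV); rewrite mul1mx.
  by have [] := smaller _ ndv; rewrite -eV; apply: IHA.
case: (pickP [pred k | ~~ (M i j %| M k j)]) => [k /= ndv | coldv].
  have [U uU eU] := row_euclid_step ndv.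
  apply: (diagonalizable_equiv uU (unitmx1 _ _)); rewrite mulmx1.
  by have [] := smaller _ ndv; rewrite -eU; apply: IHA.
pose P := tperm_mx i 0 *m M *m tperm_mx j 0.
have eP k l : P k l = M (tperm i 0 k) (tperm j 0 l) by rewrite /P -xrowE -xcolE !mxE.
apply: (diagonalizable_equiv (unitmx_perm _ (tperm i 0)) (unitmx_perm _ (tperm j 0))).
change (diagonalizable P).
have [|| U [V [S [uU uV eUPV]]]] := @pivot_clear m n P.
- by move=> l; rewrite !eP !tpermR; exact: negbFE (rowdv _).
- by move=> k; rewrite !eP !tpermR; exact: negbFE (coldv _).
apply: (diagonalizable_equiv uU uV); rewrite eUPV.
apply: diagonalizable_block; apply: IHN.
by move: lt_mn_N; rewrite addSn addnS !ltnS => /ltnW.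
Qed.

End PolyDiagonalForm.
Arguments diag_rect {F m n} d.

Definition D (f : RR -> RR) : RR -> RR := @derive1 RR RR^o f.
Definition Dn k (f : RR -> RR) : RR -> RR := @derive1n RR RR^o k f.
Definition derivable_fn (f : RR -> RR) :=
  forall t, derivable (f : RR^o -> RR^o) (t : RR^o) 1.
Definition smooth_fn (f : RR -> RR) := forall k, derivable_fn (Dn k f).

Lemma DnS k f : Dn k.+1 f = D (Dn k f). Proof. by []. Qed.
Lemma DnSr k f : Dn k.+1 f = Dn k (D f). Proof. exact: iterSr. Qed.
Lemma DnD k j f : Dn k (Dn j f) = Dn (k + j) f.
Proof. by rewrite /Dn /derive1n iterD. Qed.

Lemma smooth_fn_Dn j f : smooth_fn f -> smooth_fn (Dn j f).
Proof. by move=> sf k; rewrite DnD; apply: sf. Qed.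

Lemma derivable_fn_add f g : derivable_fn f -> derivable_fn g -> derivable_fn (f \+ g).
Proof. by move=> df dg t; apply: (@derivableD _ RR^o RR^o f g t 1 (df t) (dg t)). Qed.

Lemma D_add f g : derivable_fn f -> derivable_fn g -> D (f \+ g) = D f \+ D g.
Proof.
move=> df dg; apply/funext => t; rewrite /D /= !derive1E.
exact: (@deriveD _ RR^o RR^o f g t 1 (df t) (dg t)).
Qed.

Lemma derivable_fn_scale c f : derivable_fn f -> derivable_fn (fun t => c * f t).
Proof. by move=> df t; apply: (@derivableZ _ RR^o RR^o f c t 1 (df t)). Qed.

Lemma D_scale c f : derivable_fn f -> D (fun t => c * f t) = (fun t => c * D f t).
Proof.
move=> df; apply/funext => t; rewrite /D !derive1E.
exact: (@deriveZ _ RR^o RR^o f c t 1 (df t)).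
Qed.

Lemma Dn_zero k : Dn k (fun _ => 0) = (fun _ => 0).
Proof.
elim: k => [|k IH] //; rewrite DnS IH; apply/funext => t.
by rewrite /D derive1E; apply: (@derive_cst _ RR^o RR^o).
Qed.

Lemma smooth_fn_zero : smooth_fn (fun _ => 0).
Proof. by move=> k t; rewrite Dn_zero; apply: (@derivable_cst _ RR^o RR^o). Qed.

Lemma Dn_add f g : smooth_fn f -> smooth_fn g ->
  forall k, Dn k (f \+ g) = Dn k f \+ Dn k g.
Proof. by move=> sf sg; elim=> [|k IH] //; rewrite DnS IH D_add. Qed.

Lemma smooth_fn_add f g : smooth_fn f -> smooth_fn g -> smooth_fn (f \+ g).
Proof. by move=> sf sg k; rewrite Dn_add //; apply: derivable_fn_add. Qed.

Lemma Dn_scale c f : smooth_fn f ->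
  forall k, Dn k (fun t => c * f t) = (fun t => c * Dn k f t).
Proof. by move=> sf; elim=> [|k IH] //; rewrite DnS IH D_scale. Qed.

Lemma smooth_fn_scale c f : smooth_fn f -> smooth_fn (fun t => c * f t).
Proof. by move=> sf k; rewrite Dn_scale //; apply: derivable_fn_scale. Qed.

Lemma smooth_fn_sum N (F : 'I_N -> RR -> RR) : (forall i, smooth_fn (F i)) ->
  smooth_fn (fun t => \sum_(i < N) F i t) /\
  forall k, Dn k (fun t => \sum_(i < N) F i t) = (fun t => \sum_(i < N) Dn k (F i) t).
Proof.
elim: N F => [|N IH] F sF.
  have -> : (fun t => \sum_(i < 0) F i t) = (fun _ => 0).
    by apply/funext => t; rewrite big_ord0.
  split; first exact: smooth_fn_zero.
  by move=> k; rewrite Dn_zero; apply/funext => t; rewrite big_ord0.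
have -> : (fun t => \sum_(i < N.+1) F i t) =
    (fun t => \sum_(i < N) F (widen_ord (leqnSn N) i) t) \+ F ord_max.
  by apply/funext => t; rewrite big_ord_recr.
have [sS DS] := IH (fun i => F (widen_ord (leqnSn N) i)) (fun i => sF _).
split; first exact: smooth_fn_add.
by move=> k; rewrite Dn_add // DS; apply/funext => t; rewrite big_ord_recr.
Qed.

Definition pdiff (q : {poly RR}) (f : RR -> RR) : RR -> RR :=
  fun t => \sum_(d < size q) q`_d * Dn d f t.

Lemma pdiff_widen (q : {poly RR}) f N : (size q <= N)%N ->
  pdiff q f = (fun t => \sum_(d < N) q`_d * Dn d f t).
Proof.
move=> hN; apply/funext => t.
rewrite /pdiff (big_ord_widen N (fun d => q`_d * Dn d f t) hN) big_mkcond.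
apply: eq_bigr => d _ /=; case: ltnP => // /(nth_default 0) ->.
by rewrite mul0r.
Qed.

Lemma smooth_fn_pdiff_terms q f : smooth_fn f ->
  forall d : 'I_(size q), smooth_fn (fun t => q`_d * Dn d f t).
Proof. by move=> sf d; apply/smooth_fn_scale/smooth_fn_Dn. Qed.

Lemma smooth_fn_pdiff q f : smooth_fn f -> smooth_fn (pdiff q f).
Proof. by move=> sf; have [] := smooth_fn_sum (smooth_fn_pdiff_terms (q := q) sf). Qed.

Lemma Dn_pdiff q f : smooth_fn f -> forall k, Dn k (pdiff q f) = pdiff q (Dn k f).
Proof.
move=> sf k; have [_ ->] := smooth_fn_sum (smooth_fn_pdiff_terms (q := q) sf).
apply/funext => t; apply: eq_bigr => d _.
rewrite Dn_scale; last exact: smooth_fn_Dn.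
by rewrite !DnD addnC.
Qed.

Lemma pdiff_add_fn q f g : smooth_fn f -> smooth_fn g ->
  pdiff q (f \+ g) = pdiff q f \+ pdiff q g.
Proof.
move=> sf sg; apply/funext => t; rewrite /pdiff /= -big_split /=.
by apply: eq_bigr => d _; rewrite Dn_add // mulrDr.
Qed.

Lemma pdiff_zero_fn q : pdiff q (fun _ => 0) = (fun _ => 0).
Proof. by apply/funext => t; rewrite /pdiff big1 // => d _; rewrite Dn_zero mulr0. Qed.

Lemma pdiff_sum_fn q N (F : 'I_N -> RR -> RR) : (forall i, smooth_fn (F i)) ->
  pdiff q (fun t => \sum_(i < N) F i t) = (fun t => \sum_(i < N) pdiff q (F i) t).
Proof.
move=> sF; have [_ DF] := smooth_fn_sum sF; apply/funext => t.
rewrite /pdiff; under eq_bigr => d _ do rewrite DF mulr_sumr.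
by rewrite exchange_big.
Qed.

Lemma pdiff0 f : pdiff 0 f = (fun _ => 0).
Proof. by apply/funext => t; rewrite /pdiff size_poly0 big_ord0. Qed.

Lemma pdiffD (q1 q2 : {poly RR}) f : pdiff (q1 + q2) f = pdiff q1 f \+ pdiff q2 f.
Proof.
set N := maxn (size q1) (size q2).
rewrite (@pdiff_widen (q1 + q2) f N) ?size_polyD // (@pdiff_widen q1 f N) ?leq_maxl //.
rewrite (@pdiff_widen q2 f N) ?leq_maxr //; apply/funext => t /=; rewrite -big_split /=.
by apply: eq_bigr => d _; rewrite coefD mulrDl.
Qed.

Lemma pdiff_sum N (Q : 'I_N -> {poly RR}) f :
  pdiff (\sum_(i < N) Q i) f = (fun t => \sum_(i < N) pdiff (Q i) f t).
Proof.
elim: N Q => [|N IH] Q.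
  by rewrite big_ord0 pdiff0; apply/funext => t; rewrite big_ord0.
by rewrite big_ord_recr pdiffD IH; apply/funext => t /=; rewrite big_ord_recr.
Qed.

Lemma pdiffC (c : RR) f : pdiff c%:P f = (fun t => c * f t).
Proof.
rewrite (@pdiff_widen _ f 1) ?size_polyC_leq1 //; apply/funext => t.
by rewrite big_ord1 coefC.
Qed.

Lemma pdiffZ (c : RR) (q : {poly RR}) f : pdiff (c *: q) f = (fun t => c * pdiff q f t).
Proof.
rewrite (@pdiff_widen _ f (size q)) ?size_scale_leq //; apply/funext => t.
by rewrite /pdiff mulr_sumr; apply: eq_bigr => d _; rewrite coefZ mulrA.
Qed.

Lemma pdiffXM (q : {poly RR}) f : pdiff ('X * q) f = pdiff q (D f).
Proof.
rewrite (@pdiff_widen _ f (size q).+1); last first.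
  by apply: leq_trans (size_polyMleq _ _) _; rewrite size_polyX; case: (size q).
apply/funext => t; rewrite big_ord_recl coefXM eqxx mul0r add0r /pdiff.
by apply: eq_bigr => d _; rewrite coefXM /= add0n -DnSr.
Qed.

Lemma pdiffM (q1 q2 : {poly RR}) f : smooth_fn f ->
  pdiff (q1 * q2) f = pdiff q1 (pdiff q2 f).
Proof.
move=> sf; elim/poly_ind: q1 q2 => [|q c IH] q2; first by rewrite mul0r !pdiff0.
rewrite mulrDl -mulrA mul_polyC pdiffD IH pdiffXM pdiffZ pdiffD pdiffC mulrC pdiffXM.
by have -> : D (pdiff q2 f) = pdiff q2 (D f) := Dn_pdiff q2 sf 1.
Qed.

Lemma pdiff1 f : pdiff 1 f = f.
Proof. by rewrite -[1]/(1%:P) pdiffC; apply/funext => t; rewrite mul1r. Qed.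

Lemma pdiffXn n f : pdiff 'X^n f = Dn n f.
Proof.
rewrite (@pdiff_widen _ f n.+1) ?size_polyXn //; apply/funext => t.
rewrite (bigD1 ord_max) //= big1 ?addr0 => [|l /eqP nl]; first by rewrite coefXn eqxx mul1r.
by rewrite coefXn (_ : (l == n :> nat) = false) ?mul0r //; apply/eqP => ln; apply: nl; apply: val_inj.
Qed.

Lemma Dn_horner k (q : {poly RR}) : Dn k (horner q) = horner q^`(k).
Proof.
elim: k => [|k IH]; first by rewrite derivn0.
by rewrite DnS IH derivnS /D derivE.
Qed.

Lemma smooth_fn_horner (q : {poly RR}) : smooth_fn (horner q).
Proof. by move=> k t; rewrite Dn_horner; exact: derivable_horner. Qed.

Lemma pdiff_monomial_at0 (h : {poly RR}) n : pdiff h (horner 'X^n) 0 = h`_n * n`!%:R.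
Proof.
have hn : (n < maxn (size h) n.+1)%N by rewrite leq_max ltnSn orbT.
rewrite (@pdiff_widen _ _ _ (leq_maxl (size h) n.+1)) (bigD1 (Ordinal hn)) //=.
rewrite Dn_horner horner_coef0 coef_derivn addn0 coefXn eqxx ffactnn big1 ?addr0 //.
move=> l /eqP nl; rewrite Dn_horner horner_coef0 coef_derivn addn0 coefXn.
by rewrite (_ : (l == n :> nat) = false) ?mul0rn ?mulr0 //; apply/eqP => ln; apply: nl; apply: val_inj.
Qed.

Lemma pdiffXn_monomial n : pdiff 'X^(n.+1) (horner 'X^n) = (fun _ => 0).
Proof.
rewrite pdiffXn Dn_horner; apply/funext => t.
suff -> : derivn n.+1 ('X^n : {poly RR}) = 0 by rewrite horner0.
apply/polyP => i; rewrite coef_derivn coefXn coef0.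
by rewrite gtn_eqF ?mul0rn // addSn ltnS leq_addr.
Qed.

Definition traj_of n (F : 'I_n -> RR -> RR) : traj n := fun t => \col_j F j t.

Lemma comp_traj_of n (F : 'I_n -> RR -> RR) j : Defs.comp (traj_of F) j = F j.
Proof. by apply/funext => t; rewrite /Defs.comp /traj_of mxE. Qed.

Lemma traj_ext n (w1 w2 : traj n) :
  (forall j, Defs.comp w1 j = Defs.comp w2 j) -> w1 = w2.
Proof.
move=> h; apply/funext => t; apply/matrixP => i j.
by rewrite ord1; exact: (congr1 (fun f => f t) (h i)).
Qed.

Lemma smoothP n (w : traj n) : smooth w <-> forall j, smooth_fn (Defs.comp w j).
Proof. by []. Qed.

Lemma comp_add n (w1 w2 : traj n) j :
  Defs.comp (w1 \+ w2) j = Defs.comp w1 j \+ Defs.comp w2 j.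
Proof. by apply/funext => t; rewrite /Defs.comp /= mxE. Qed.

Lemma smooth_add n (w1 w2 : traj n) : smooth w1 -> smooth w2 -> smooth (w1 \+ w2).
Proof.
by move=> s1 s2; apply/smoothP => j; rewrite comp_add; apply: smooth_fn_add; [exact: s1 | exact: s2].
Qed.

Definition traj0 n : traj n := fun _ => 0.

Lemma comp_traj0 n j : Defs.comp (traj0 n) j = (fun _ => 0).
Proof. by apply/funext => t; rewrite /Defs.comp /traj0 mxE. Qed.

Lemma smooth_traj0 n : smooth (traj0 n).
Proof. by apply/smoothP => j; rewrite comp_traj0; exact: smooth_fn_zero. Qed.

Lemma comp_polyop k n (A : 'M[{poly RR}]_(k, n)) w i :
  Defs.comp (polyop A w) i = (fun t => \sum_(l < n) pdiff (A i l) (Defs.comp w l) t).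
Proof. by apply/funext => t; rewrite /Defs.comp /polyop mxE. Qed.

Lemma smooth_polyop k n (A : 'M[{poly RR}]_(k, n)) w : smooth w -> smooth (polyop A w).
Proof.
move=> sw; apply/smoothP => i; rewrite comp_polyop.
by have [] // := smooth_fn_sum (fun l => smooth_fn_pdiff (q := A i l) (sw l)).
Qed.

Lemma polyop_mul k n r (A : 'M[{poly RR}]_(k, n)) (B : 'M[{poly RR}]_(n, r)) w :
  smooth w -> polyop (A *m B) w = polyop A (polyop B w).
Proof.
move=> sw; apply: traj_ext => i; rewrite !comp_polyop; apply/funext => t.
have sB j l : smooth_fn (pdiff (B j l) (Defs.comp w l)) by apply: smooth_fn_pdiff; exact: sw.
under [RHS]eq_bigr => j _ do rewrite comp_polyop (pdiff_sum_fn _ (sB j)).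
rewrite exchange_big; apply: eq_bigr => l _.
rewrite mxE pdiff_sum /=; apply: eq_bigr => j _.
by rewrite pdiffM //; exact: sw.
Qed.

Lemma polyop_add k n (A : 'M[{poly RR}]_(k, n)) w1 w2 : smooth w1 -> smooth w2 ->
  polyop A (w1 \+ w2) = polyop A w1 \+ polyop A w2.
Proof.
move=> s1 s2; apply: traj_ext => i; rewrite comp_add !comp_polyop; apply/funext => t /=.
by rewrite -big_split; apply: eq_bigr => l _; rewrite comp_add (pdiff_add_fn _ (s1 l) (s2 l)).
Qed.

Lemma polyop_traj0 k n (A : 'M[{poly RR}]_(k, n)) : polyop A (traj0 n) = traj0 k.
Proof.
apply: traj_ext => i; rewrite comp_polyop comp_traj0; apply/funext => t.
by rewrite big1 // => l _; rewrite comp_traj0 pdiff_zero_fn.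
Qed.

Lemma polyop0 k n (w : traj n) : polyop (0 : 'M[{poly RR}]_(k, n)) w = traj0 k.
Proof.
apply: traj_ext => i; rewrite comp_polyop comp_traj0; apply/funext => t.
by rewrite big1 // => l _; rewrite mxE pdiff0.
Qed.

Lemma polyop1 n (w : traj n) : polyop (1%:M : 'M[{poly RR}]_n) w = w.
Proof.
apply: traj_ext => i; rewrite comp_polyop; apply/funext => t.
rewrite (bigD1 i) //= big1 ?addr0 => [|l /negPf nl]; first by rewrite mxE eqxx pdiff1.
by rewrite mxE eq_sym nl pdiff0.
Qed.

Lemma comp_polyop_diag n (r : 'rV[{poly RR}]_n) w j :
  Defs.comp (polyop (diag_mx r) w) j = pdiff (r 0 j) (Defs.comp w j).
Proof.
rewrite comp_polyop; apply/funext => t.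
rewrite (bigD1 j) //= big1 ?addr0 => [|l /negPf nl]; first by rewrite mxE eqxx mulr1n.
by rewrite mxE eq_sym nl mulr0n pdiff0.
Qed.

Lemma kerB_traj0 k n (A : 'M[{poly RR}]_(k, n)) : kerB A (traj0 n).
Proof. by split; [exact: smooth_traj0 | move=> t; rewrite polyop_traj0]. Qed.

Lemma kerB_add k n (A : 'M[{poly RR}]_(k, n)) w1 w2 :
  kerB A w1 -> kerB A w2 -> kerB A (w1 \+ w2).
Proof.
move=> [s1 h1] [s2 h2]; split; first exact: smooth_add.
by move=> t; rewrite polyop_add //= h1 h2 addr0.
Qed.

Definition restrict n (S : pred 'I_n) (w : traj n) : traj n :=
  traj_of (fun j => if S j then Defs.comp w j else fun _ => 0).

Lemma comp_restrict n (S : pred 'I_n) w j :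
  Defs.comp (restrict S w) j = if S j then Defs.comp w j else fun _ => 0.
Proof. exact: comp_traj_of. Qed.

Lemma smooth_restrict n (S : pred 'I_n) w : smooth w -> smooth (restrict S w).
Proof.
by move=> sw; apply/smoothP => j; rewrite comp_restrict; case: (S j); [exact: sw | exact: smooth_fn_zero].
Qed.

Lemma restrict_split n (S : pred 'I_n) w : w = restrict S w \+ restrict (predC S) w.
Proof.
apply: traj_ext => j; rewrite comp_add !comp_restrict /=; apply/funext => t /=.
by case: (S j); rewrite ?addr0 ?add0r.
Qed.

Lemma pdiff_muln (q : {poly RR}) (b : bool) f :
  pdiff (q *+ b) f = if b then pdiff q f else fun _ => 0.
Proof. by case: b; rewrite ?mulr0n ?mulr1n ?pdiff0. Qed.

Lemma unitmx_det_neq0 (T : comUnitRingType) n (A : 'M[T]_n) : A \in unitmx -> \det A != 0.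
Proof. by rewrite unitmxE; apply: contraTneq => ->; rewrite unitr0. Qed.

Section KernelInclusion.
Variables (p k k1 : nat) (G : 'M[{poly RR}]_(k, p)) (G1 : 'M[{poly RR}]_(k1, p)).
Variables (L : 'M[{poly RR}]_k) (R : 'M[{poly RR}]_p) (d : seq {poly RR}).
Hypotheses (uL : L \in unitmx) (uR : R \in unitmx) (dG : G = L *m diag_rect d *m R).

(* In the coordinates x = R(d/dt) y, the equations G y = 0 read d_j(d/dt) x_j = 0
   for the torsion coordinates and impose nothing on the free ones. *)
Definition torsion (j : 'I_p) : bool := (j < k)%N && (d`_j != 0).

Lemma diag_rect_kerP (x : traj p) :
  polyop (diag_rect d) x = traj0 k <->
  forall j, torsion j -> pdiff d`_j (Defs.comp x j) = fun _ => 0.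
Proof.
split=> [Dx0 j /andP [jk dj] | xt].
  have := congr1 (fun w => Defs.comp w (Ordinal jk)) Dx0; rewrite comp_polyop comp_traj0 => <-.
  apply/funext => t; rewrite (bigD1 j) //= big1 => [|l /eqP jl]; first by rewrite mxE eqxx addr0.
  by rewrite mxE pdiff_muln (_ : (j == l :> nat) = false) //; apply/eqP => jl'; apply: jl; apply: val_inj.
apply: traj_ext => i; rewrite comp_polyop comp_traj0; apply/funext => t.
rewrite big1 // => l _; rewrite mxE pdiff_muln; case: eqP => // il.
have [-> | dl] := eqVneq d`_i 0; first by rewrite pdiff0.
by rewrite il xt // /torsion -il ltn_ord dl.
Qed.

Definition test_poly (c : 'I_p -> {poly RR}) (j : 'I_p) := if torsion j then d`_j else c j.
Definition test_op (c : 'I_p -> {poly RR}) : 'M[{poly RR}]_p :=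
  diag_mx (\row_j test_poly c j) *m R.

Lemma test_op_nonsingular c : (forall j, ~~ torsion j -> c j != 0) -> \det (test_op c) != 0.
Proof.
move=> nzc; rewrite det_mulmx det_diag mulf_neq0 ?unitmx_det_neq0 //.
rewrite prodf_seq_neq0; apply/allP => j _; rewrite mxE /test_poly.
by case: ifP => [/andP [] | /negbT /nzc].
Qed.

Lemma test_op_ker c y : kerB (test_op c) y -> kerB G y.
Proof.
move=> [sy hy]; split => // t.
have Dx0 : polyop (diag_rect d) (polyop R y) = traj0 k.
  apply/diag_rect_kerP => j tj.
  have <- : test_poly c j = d`_j by rewrite /test_poly tj.
  have := comp_polyop_diag (\row_j test_poly c j) (polyop R y) j; rewrite mxE => <-.
  by rewrite -polyop_mul //; apply/funext => t'; rewrite /Defs.comp hy mxE.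
by rewrite dG -mulmxA !polyop_mul ?smooth_polyop // Dx0 polyop_traj0.
Qed.

Lemma kerB_test_op c x : smooth x ->
  (forall j, pdiff (test_poly c j) (Defs.comp x j) = fun _ => 0) ->
  kerB (test_op c) (polyop (invmx R) x).
Proof.
move=> sx hx; split; first exact: smooth_polyop.
move=> t; rewrite /test_op polyop_mul; last exact: smooth_polyop.
rewrite -(polyop_mul R (invmx R) sx) mulmxV // polyop1.
suff -> : polyop (diag_mx (\row_j test_poly c j)) x = traj0 p by [].
by apply: traj_ext => j; rewrite comp_polyop_diag mxE hx comp_traj0.
Qed.

Hypothesis Htest : forall P : 'M[{poly RR}]_p, \det P != 0 ->
  (forall y, kerB P y -> kerB G y) -> forall y, kerB P y -> kerB G1 y.

Lemma test_op_ker_G1 c y : (forall j, ~~ torsion j -> c j != 0) ->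
  kerB (test_op c) y -> kerB G1 y.
Proof. by move=> nzc; apply: Htest; [exact: test_op_nonsingular | exact: test_op_ker]. Qed.

(* the free coordinates cannot be constrained by G1: probing coordinate j with
   t |-> t^n shows that every coefficient of the entry (G1 R^-1)_ij vanishes *)
Lemma free_column_vanishes i j : ~~ torsion j -> (G1 *m invmx R) i j = 0.
Proof.
move=> fj; apply/polyP => n; rewrite coef0.
pose v := restrict (pred1 j) (traj_of (fun _ => horner 'X^n)).
have sv : smooth v.
  by apply: smooth_restrict; apply/smoothP => l; rewrite comp_traj_of; exact: smooth_fn_horner.
have kv : kerB G1 (polyop (invmx R) v).
  apply: (@test_op_ker_G1 (fun _ => 'X^(n.+1))) => [l _ | ]; first by rewrite monic_neq0 ?monicXn.
  apply: kerB_test_op => // l; rewrite comp_restrict comp_traj_of /=.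
  case: eqP => [-> | _]; last exact: pdiff_zero_fn.
  by rewrite /test_poly (negPf fj) pdiffXn_monomial.
have := congr1 (fun w => Defs.comp w i 0) (polyop_mul G1 (invmx R) sv).
rewrite {2}/Defs.comp kv.2 mxE comp_polyop (bigD1 j) //= big1 => [|l /negPf lj]; last first.
  by rewrite comp_restrict /= lj pdiff_zero_fn.
rewrite comp_restrict /= eqxx comp_traj_of pdiff_monomial_at0 addr0 => /eqP.
by rewrite mulf_eq0 pnatr_eq0 eqn0Ngt fact_gt0 orbF => /eqP.
Qed.

(* split x = R y into its torsion part, killed by a test operator, and its free
   part, on which G1 R^-1 vanishes by the lemma above *)
Lemma kerB_incl_of_diag y : kerB G y -> kerB G1 y.
Proof.
move=> [sy hy]; pose x := polyop R y; have sx : smooth x by exact: smooth_polyop.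
have Dx0 : polyop (diag_rect d) x = traj0 k.
  have DR : diag_rect d *m R = invmx L *m G by rewrite dG -!mulmxA mulKmx.
  have Gy0 : polyop G y = traj0 k by apply/funext => t; rewrite hy.
  by rewrite /x -polyop_mul // DR polyop_mul // Gy0 polyop_traj0.
have -> : y = polyop (invmx R) x by rewrite /x -polyop_mul // mulVmx // polyop1.
rewrite (restrict_split torsion x) polyop_add; try exact: smooth_restrict.
apply: kerB_add.
  apply: (@test_op_ker_G1 (fun _ => 1)) => [j _ | ]; first exact: oner_neq0.
  apply: kerB_test_op => [|j]; first exact: smooth_restrict.
  rewrite comp_restrict /test_poly; case: ifP => tj; last exact: pdiff_zero_fn.
  exact: (proj1 (diag_rect_kerP x) Dx0 j tj).
split; first by apply/smooth_polyop/smooth_restrict.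
move=> t; rewrite -polyop_mul; last exact: smooth_restrict.
suff -> : polyop (G1 *m invmx R) (restrict (predC torsion) x) = traj0 k1 by [].
apply: traj_ext => i; rewrite comp_polyop comp_traj0; apply/funext => t'.
rewrite big1 // => l _; rewrite comp_restrict /=.
case: (boolP (torsion l)) => tl /=; first by rewrite pdiff_zero_fn.
by rewrite free_column_vanishes // pdiff0.
Qed.

End KernelInclusion.

Lemma kerB_incl_test p k k1 (G : 'M[{poly RR}]_(k, p)) (G1 : 'M[{poly RR}]_(k1, p)) :
  (forall P : 'M[{poly RR}]_p, \det P != 0 ->
     (forall y, kerB P y -> kerB G y) -> forall y, kerB P y -> kerB G1 y) ->
  forall y, kerB G y -> kerB G1 y.
Proof.
move=> Htest; have [L [R [d [uL uR dG]]]] := poly_diagonalizable G.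
exact: kerB_incl_of_diag uL uR dG Htest.
Qed.

Lemma implements_autonomous m p (P : 'M[{poly RR}]_p) (C : io_contract m p) :
  \det P != 0 -> (forall y, kerB P y -> BoG C y) -> implements P 0 C.
Proof.
move=> dP hP; split; first by split => // i j; rewrite mulmx0 mxE size_poly0.
move=> k E _ y [u [_ [_ [sy hy]]]]; apply: hP; split => // t.
by rewrite hy polyop0.
Qed.

(* refinement transfers the guarantees: apply it to the autonomous
   implementations of C and use the kernel inclusion test *)
Lemma refines_guarantees m p (C C' : io_contract m p) :
  refines C C' -> forall y, BoG C y -> BoG C' y.
Proof.
move=> [_ impl]; apply: kerB_incl_test => P dP hP y Py.
have [_ impl'] := impl P 0 (implements_autonomous dP hP).
apply: (impl' _ (Amat C') (fun u h => h)); exists (traj0 m).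
split; first exact: kerB_traj0.
split; first exact: smooth_traj0.
by split; [exact: Py.1 | move=> t; rewrite Py.2 polyop0].
Qed.

Lemma refinesP m p (C C' : io_contract m p) :
  refines C C' <->
  (forall u, BiA C' u -> BiA C u) /\ (forall y, BoG C y -> BoG C' y).
Proof.
split=> [RCC' | [hA hG]].
  split; last exact: refines_guarantees.
  by case: RCC' => compat _; apply: (compat _ (Amat C')).
split=> [k E cE u /cE /hA // | P Q [io impl]].
split=> // k E cE y /(impl k E (fun u h => hA u (cE u h))); exact: hG.
Qed.

Lemma sumB_kerB_sub n k1 k2 k (A1 : 'M[{poly RR}]_(k1, n)) (A2 : 'M[{poly RR}]_(k2, n))
    (A : 'M[{poly RR}]_(k, n)) :
  (forall w, sumB (kerB A1) (kerB A2) w -> kerB A w) <->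
  (forall w, kerB A1 w -> kerB A w) /\ (forall w, kerB A2 w -> kerB A w).
Proof.
split=> [hsum | [h1 h2] w [a [b [ha [hb ->]]]]]; last exact: kerB_add (h1 _ ha) (h2 _ hb).
split=> w hw; apply: hsum.
  exists w, (traj0 n); split=> //; split; first exact: kerB_traj0.
  by apply/funext => t /=; rewrite addr0.
exists (traj0 n), w; split; first exact: kerB_traj0.
by split=> //; apply/funext => t /=; rewrite add0r.
Qed.

Theorem lemma2 (m p : nat) (C C1 C2 : io_contract m p) :
  (refines C C1 /\ refines C C2) <->
  ((forall u, sumB (BiA C1) (BiA C2) u -> BiA C u) /\
   (forall y, BoG C y -> BoG C1 y /\ BoG C2 y)).
Proof.
have HA := sumB_kerB_sub (Amat C1) (Amat C2) (Amat C).
split=> [[/refinesP [a1 g1] /refinesP [a2 g2]] | [/HA [a1 a2] hG]].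
  by split; [apply/HA | move=> y hy; split; [exact: g1 | exact: g2]].
by split; apply/refinesP; split=> // y /hG [].
Qed.
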